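(* Let $P$ be a finite nonempty set of points lying in a single quadrant $Q$ with respect to the origin $s$, and let $e\ne s$ be such that the line $\overline{se}$ is not in the quadrant $Q$. Then, with $d^{\max}=\max_{p\in P} d(p,\overline{se})$, $$d^{\max} \ge \max\Big\{ \min\{d(l_1,\overline{se}),d(l_2,\overline{se})\},\ \min\{d(u_1,\overline{se}),d(l_2,\overline{se})\},\ \text{the third largest of } d(c_1,\overline{se}),\dots,d(c_4,\overline{se})\Big\},$$ and for every $p\in P$, $$d(p,\overline{se}) \le \max_{i\in\{1,2,3,4\}} d(c_i,\overline{se}).$$
   Context: Bounded Quadrant System (BQS) setup. Points are in the plane with UTM-projected $x$ and $y$ axes, and the start point $s$ is taken as the origin. For a point $p\ne s$, $\theta(p)\in[0,2\pi)$ is the angle between the positive $x$ axis and the vector from $s$ to $p$; $\theta_{s,e}=\theta(e)$. The four quadrants are $Q_k=\{p\neq s: (k-1)\pi/2 \le \theta(p) < k\pi/2\}$, $k=1,\dots,4$; quadrant $Q_k$ has angle range $[\theta^Q_{start},\theta^Q_{end}) = [(k-1)\pi/2,k\pi/2)$. A line $\overline{se}$ is ''in'' quadrant $Q$ if $\theta^Q_{start}\le \theta_{s,e}<\theta^Q_{end}$. For a finite nonempty $P\subset Q$: the bounding box is the smallest closed axis-parallel rectangle containing $P$, with corners $c_1,\dots,c_4$. $\theta_{lb}=\min_{p\in P}\theta(p)$ and $\theta_{ub}=\max_{p\in P}\theta(p)$; the lower (resp. upper) bounding line is the ray from $s$ at angle $\theta_{lb}$ (resp. $\theta_{ub}$).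 $l_1,l_2$ are the intersection points of the lower bounding line with the boundary of the bounding box and $u_1,u_2$ those of the upper bounding line, with index 1 the intersection nearer to $s$ (they may coincide). $d(p,\overline{se})$ is the Euclidean distance from the point $p$ to the line segment from $s$ to $e$. *)

From Stdlib Require Import Reals Lra List.
Import ListNotations.
Open Scope R_scope.

Definition pt := (R * R)%type.
Definition s0 : pt := (0, 0).

(* polar angle theta(p) in [0, 2*PI) of the vector from s = origin to p
   (value at p = origin irrelevant; set to 0). *)
Definition theta (p : pt) : R :=
  let (x, y) := p in
  if Rlt_dec 0 x then
    (if Rle_dec 0 y then atan (y / x) else 2 * PI + atan (y / x))
  else if Rlt_dec x 0 then PI + atan (y / x)
  else (if Rlt_dec 0 y then PI / 2 else if Rlt_dec y 0 then 3 * PI / 2 else 0).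

Definition in_quadrant (k : nat) (p : pt) : Prop :=
  p <> s0 /\ (INR k - 1) * PI / 2 <= theta p < INR k * PI / 2.

Definition line_in_quadrant (k : nat) (e : pt) : Prop :=
  (INR k - 1) * PI / 2 <= theta e < INR k * PI / 2.

Definition clamp01 (t : R) : R := Rmax 0 (Rmin 1 t).
Definition dseg (p e : pt) : R :=
  let (px, py) := p in let (ex, ey) := e in
  let t := clamp01 ((px * ex + py * ey) / (ex * ex + ey * ey)) in
  sqrt ((px - t * ex) ^ 2 + (py - t * ey) ^ 2).

Definition lmin (f : pt -> R) (P : list pt) : R :=
  fold_right Rmin (f (hd s0 P)) (map f P).
Definition lmax (f : pt -> R) (P : list pt) : R :=
  fold_right Rmax (f (hd s0 P)) (map f P).

Definition xmin P := lmin fst P.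
Definition xmax P := lmax fst P.
Definition ymin P := lmin snd P.
Definition ymax P := lmax snd P.
Definition corner1 P : pt := (xmin P, ymin P).
Definition corner2 P : pt := (xmax P, ymin P).
Definition corner3 P : pt := (xmax P, ymax P).
Definition corner4 P : pt := (xmin P, ymax P).
Definition in_box (P : list pt) (q : pt) : Prop :=
  xmin P <= fst q <= xmax P /\ ymin P <= snd q <= ymax P.

Definition theta_lb P := lmin theta P.
Definition theta_ub P := lmax theta P.

Definition ray_pt (th t : R) : pt := (t * cos th, t * sin th).

(* q1 (nearer to s) and q2 are the two intersection points of the ray from s at
   angle th with the boundary of the bounding box of P: the entry and exit points
   of the ray through the box. *)
Definition ray_box_points (P : list pt) (th : R) (q1 q2 : pt) : Prop :=
  exists t1 t2,
    0 <= t1 /\ 0 <= t2 /\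
    in_box P (ray_pt th t1) /\ in_box P (ray_pt th t2) /\
    (forall t, 0 <= t -> in_box P (ray_pt th t) -> t1 <= t <= t2) /\
    q1 = ray_pt th t1 /\ q2 = ray_pt th t2.

Fixpoint insert_desc (x : R) (l : list R) : list R :=
  match l with
  | [] => [x]
  | y :: l' => if Rle_dec y x then x :: l else y :: insert_desc x l'
  end.
Fixpoint sort_desc (l : list R) : list R :=
  match l with
  | [] => []
  | x :: l' => insert_desc x (sort_desc l')
  end.
Definition third_largest (a b c d : R) : R := nth 2 (sort_desc [a; b; c; d]) 0.

From Stdlib Require Import Reals Lra Lia Psatz List.
Import ListNotations.
Open Scope R_scope.

(* The distance to the segment se, p |-> d(p, se), is a convex function of p
   vanishing at s.  Convexity bounds it on the bounding box by its values at the
   four corners.  Convexity together with d(s, se) = 0 makes it nondecreasing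
   along every ray from s, so the entry point l1 (resp. u1) of the lower (upper)
   bounding ray is no farther from se than the point of P lying on that ray.
   Finally, since se is not in Q, one coordinate of e has the sign opposite to
   that coordinate on Q; pushing a point of Q away from the corresponding axis
   then increases its distance to se.  Hence both corners on the side of the box
   nearest to that axis are dominated by the points of P realising the extreme
   values of the other coordinate, and at most two corners exceed d^max. *)

Lemma clamp01_bounds t : 0 <= clamp01 t <= 1.
Proof. unfold clamp01, Rmax, Rmin; repeat destruct Rle_dec; lra. Qed.

Lemma clamp01_nearest c t : 0 <= t <= 1 -> (clamp01 c - c)² <= (t - c)².
Proof.
  intros Ht; pose proof (Rle_0_sqr (t - c)); unfold clamp01, Rmax, Rmin, Rsqr in *.
  repeat destruct Rle_dec; nra.
Qed.

Lemma dseg_attained px py ex ey :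
  exists t, 0 <= t <= 1 /\ dseg (px, py) (ex, ey) = dist_euc px py (t * ex) (t * ey).
Proof.
  eexists; split; [apply clamp01_bounds|].
  unfold dseg, dist_euc; rewrite !Rsqr_pow2; reflexivity.
Qed.

Lemma dseg_le_dist px py ex ey t : 0 <= t <= 1 ->
  dseg (px, py) (ex, ey) <= dist_euc px py (t * ex) (t * ey).
Proof.
  intros Ht; unfold dseg, dist_euc; rewrite <- !Rsqr_pow2; apply sqrt_le_1_alt.
  set (E := ex * ex + ey * ey); set (c := (px * ex + py * ey) / E).
  destruct (Req_dec E 0) as [HE | HE].
  - assert (ex = 0 /\ ey = 0) as [-> ->] by (unfold E in HE; nra).
    unfold Rsqr; lra.
  - assert (Hsq : forall s, (px - s * ex)² + (py - s * ey)² = E * (s - c)² + (px² + py² - E * c²))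
      by (intros s; unfold c, E, Rsqr in *; field; exact HE).
    rewrite !Hsq.
    assert (0 < E) by (unfold E in *; nra).
    pose proof (clamp01_nearest c t Ht); nra.
Qed.

Lemma dseg_nonneg p e : 0 <= dseg p e.
Proof. destruct p, e; apply sqrt_pos. Qed.

Lemma dseg_origin e : dseg (0, 0) e = 0.
Proof.
  destruct e as [ex ey]; apply Rle_antisym; [|apply dseg_nonneg].
  eapply Rle_trans; [apply (dseg_le_dist 0 0 ex ey 0); lra|].
  rewrite !Rmult_0_l, distance_refl; apply Rle_refl.
Qed.

Lemma dist_euc_scaled l x0 y0 x1 y1 a0 b0 a1 b1 : 0 <= l ->
  a0 - a1 = l * (x0 - x1) -> b0 - b1 = l * (y0 - y1) ->
  dist_euc a0 b0 a1 b1 = l * dist_euc x0 y0 x1 y1.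
Proof.
  intros Hl Ha Hb; unfold dist_euc.
  rewrite Ha, Hb, !Rsqr_mult, <- Rmult_plus_distr_l, sqrt_mult_alt, sqrt_Rsqr;
    [reflexivity | exact Hl | apply Rle_0_sqr].
Qed.

Lemma dseg_convex px py qx qy e l : 0 <= l <= 1 ->
  dseg (l * px + (1 - l) * qx, l * py + (1 - l) * qy) e
    <= l * dseg (px, py) e + (1 - l) * dseg (qx, qy) e.
Proof.
  destruct e as [ex ey]; intros Hl.
  destruct (dseg_attained px py ex ey) as [t [Ht ->]].
  destruct (dseg_attained qx qy ex ey) as [t' [Ht' ->]].
  eapply Rle_trans; [apply (dseg_le_dist _ _ _ _ (l * t + (1 - l) * t')); split; nra|].
  set (mx := l * (t * ex) + (1 - l) * qx); set (my := l * (t * ey) + (1 - l) * qy).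
  eapply Rle_trans; [apply (triangle _ _ _ _ mx my)|].
  rewrite (dist_euc_scaled l px py (t * ex) (t * ey) _ _ mx my),
          (dist_euc_scaled (1 - l) qx qy (t' * ex) (t' * ey) mx my); unfold mx, my;
    try ring; lra.
Qed.

Lemma dseg_convex_le_max px py qx qy e l : 0 <= l <= 1 ->
  dseg (l * px + (1 - l) * qx, l * py + (1 - l) * qy) e
    <= Rmax (dseg (px, py) e) (dseg (qx, qy) e).
Proof.
  intros Hl; eapply Rle_trans; [apply dseg_convex; exact Hl|].
  pose proof (Rmax_l (dseg (px, py) e) (dseg (qx, qy) e)).
  pose proof (Rmax_r (dseg (px, py) e) (dseg (qx, qy) e)); nra.
Qed.

Lemma dseg_ray_monotone th t1 t2 e : 0 <= t1 <= t2 ->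
  dseg (ray_pt th t1) e <= dseg (ray_pt th t2) e.
Proof.
  intros Ht; unfold ray_pt.
  destruct (Req_dec t2 0) as [Ht2 | Ht2].
  { replace t1 with t2 by lra; apply Rle_refl. }
  assert (Hl : 0 <= t1 / t2 <= 1).
  { split; [apply Rmult_le_pos; [lra | left; apply Rinv_0_lt_compat; lra]|].
    apply (Rmult_le_reg_r t2); [lra|]; unfold Rdiv; rewrite Rmult_assoc, Rinv_l; lra. }
  pose proof (dseg_convex (t2 * cos th) (t2 * sin th) 0 0 e _ Hl) as H.
  rewrite dseg_origin in H.
  replace (t1 / t2 * (t2 * cos th) + (1 - t1 / t2) * 0) with (t1 * cos th) in H by (field; lra).
  replace (t1 / t2 * (t2 * sin th) + (1 - t1 / t2) * 0) with (t1 * sin th) in H by (field; lra).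
  pose proof (dseg_nonneg (t2 * cos th, t2 * sin th) e); nra.
Qed.

Lemma dseg_swap px py ex ey : dseg (px, py) (ex, ey) = dseg (py, px) (ey, ex).
Proof.
  unfold dseg.
  rewrite (Rplus_comm (py * ey)), (Rplus_comm (ey * ey)), (Rplus_comm ((py - _) ^ 2)).
  reflexivity.
Qed.

(* Moving away from the axis x = 0, on the side opposite to e, increases the distance. *)
Lemma dseg_move_x x0 x y ex ey : ex * (x - x0) <= 0 -> 0 <= x0 * (x - x0) ->
  dseg (x0, y) (ex, ey) <= dseg (x, y) (ex, ey).
Proof.
  intros Hex Hx0.
  destruct (dseg_attained x y ex ey) as [t [Ht ->]].
  eapply Rle_trans; [apply dseg_le_dist; exact Ht|].
  unfold dist_euc; apply sqrt_le_1_alt.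
  pose proof (Rle_0_sqr (x - x0)); unfold Rsqr in *.
  assert (0 <= t * - (ex * (x - x0))) by (apply Rmult_le_pos; lra).
  lra.
Qed.

Lemma dseg_move_y y0 x y ex ey : ey * (y - y0) <= 0 -> 0 <= y0 * (y - y0) ->
  dseg (x, y0) (ex, ey) <= dseg (x, y) (ex, ey).
Proof. rewrite !(dseg_swap x); apply dseg_move_x. Qed.

Lemma convex_comb_of_between a b x : a <= x <= b ->
  exists l, 0 <= l <= 1 /\ x = l * a + (1 - l) * b.
Proof.
  intros Hx; destruct (Req_dec a b) as [<- | Hab].
  - exists 1; split; lra.
  - exists ((b - x) / (b - a)); split; [|field; lra].
    split; [apply Rmult_le_pos; [lra | left; apply Rinv_0_lt_compat; lra]|].
    apply (Rmult_le_reg_r (b - a)); [lra|]; unfold Rdiv; rewrite Rmult_assoc, Rinv_l; lra.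
Qed.

Lemma dseg_between_x a b x y e : a <= x <= b ->
  dseg (x, y) e <= Rmax (dseg (a, y) e) (dseg (b, y) e).
Proof.
  intros Hx; destruct (convex_comb_of_between a b x Hx) as [l [Hl ->]].
  replace y with (l * y + (1 - l) * y) at 1 by ring.
  apply dseg_convex_le_max; exact Hl.
Qed.

Lemma dseg_between_y a b x y ex ey : a <= y <= b ->
  dseg (x, y) (ex, ey) <= Rmax (dseg (x, a) (ex, ey)) (dseg (x, b) (ex, ey)).
Proof. rewrite !(dseg_swap x); apply dseg_between_x. Qed.

Section ListExtrema.

Variables (A : Type) (f : A -> R).

Lemma fold_right_Rmax_ge z l p : In p l -> f p <= fold_right Rmax z (map f l).
Proof.
  induction l as [|a l IH]; [contradiction|]; intros [<- | Hp]; simpl.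
  - apply Rmax_l.
  - eapply Rle_trans; [apply IH, Hp | apply Rmax_r].
Qed.

Lemma fold_right_Rmin_le z l p : In p l -> fold_right Rmin z (map f l) <= f p.
Proof.
  induction l as [|a l IH]; [contradiction|]; intros [<- | Hp]; simpl.
  - apply Rmin_l.
  - eapply Rle_trans; [apply Rmin_r | apply IH, Hp].
Qed.

Lemma fold_right_Rmax_attained z l :
  fold_right Rmax z (map f l) = z \/ exists p, In p l /\ fold_right Rmax z (map f l) = f p.
Proof.
  induction l as [|a l IH]; simpl; [now left|].
  destruct (Rle_dec (f a) (fold_right Rmax z (map f l))).
  - rewrite Rmax_right by assumption.
    destruct IH as [H | [p [Hp H]]]; [now left | right; exists p; auto].
  - rewrite Rmax_left by lra; right; exists a; auto.
Qed.

Lemma fold_right_Rmin_attained z l :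
  fold_right Rmin z (map f l) = z \/ exists p, In p l /\ fold_right Rmin z (map f l) = f p.
Proof.
  induction l as [|a l IH]; simpl; [now left|].
  destruct (Rle_dec (f a) (fold_right Rmin z (map f l))).
  - rewrite Rmin_left by assumption; right; exists a; auto.
  - rewrite Rmin_right by lra.
    destruct IH as [H | [p [Hp H]]]; [now left | right; exists p; auto].
Qed.

End ListExtrema.

Lemma lmax_ge f P p : In p P -> f p <= lmax f P.
Proof. apply fold_right_Rmax_ge. Qed.

Lemma lmin_le f P p : In p P -> lmin f P <= f p.
Proof. apply fold_right_Rmin_le. Qed.

Lemma lmax_attained f P : P <> [] -> exists p, In p P /\ lmax f P = f p.
Proof.
  intros HP; unfold lmax.
  destruct (fold_right_Rmax_attained _ f (f (hd s0 P)) P) as [H | H]; [|exact H].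
  exists (hd s0 P); split; [destruct P; [congruence | now left] | exact H].
Qed.

Lemma lmin_attained f P : P <> [] -> exists p, In p P /\ lmin f P = f p.
Proof.
  intros HP; unfold lmin.
  destruct (fold_right_Rmin_attained _ f (f (hd s0 P)) P) as [H | H]; [|exact H].
  exists (hd s0 P); split; [destruct P; [congruence | now left] | exact H].
Qed.

Lemma in_box_of_In P p : In p P -> in_box P p.
Proof.
  intros Hp; unfold in_box, xmin, xmax, ymin, ymax.
  repeat split; [apply (lmin_le fst) | apply (lmax_ge fst) | apply (lmin_le snd) | apply (lmax_ge snd)];
    exact Hp.
Qed.

Lemma dseg_in_box_le_corners P q e : in_box P q ->
  dseg q e <= Rmax (Rmax (dseg (corner1 P) e) (dseg (corner2 P) e))
                   (Rmax (dseg (corner3 P) e) (dseg (corner4 P) e)).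
Proof.
  destruct q as [x y], e as [ex ey]; intros [Hx Hy].
  pose proof (dseg_between_x _ _ x y (ex, ey) Hx) as H.
  pose proof (dseg_between_y _ _ (xmin P) y ex ey Hy) as Hmin.
  pose proof (dseg_between_y _ _ (xmax P) y ex ey Hy) as Hmax.
  unfold corner1, corner2, corner3, corner4; revert H Hmin Hmax.
  unfold Rmax; repeat destruct Rle_dec; lra.
Qed.

Lemma third_largest_le_of_side a b c d M :
  (a <= M /\ b <= M) \/ (b <= M /\ c <= M) \/ (c <= M /\ d <= M) \/ (a <= M /\ d <= M) ->
  third_largest a b c d <= M.
Proof.
  intros [[] | [[] | [[] | []]]]; unfold third_largest; simpl;
    repeat (destruct Rle_dec; simpl); lra.
Qed.

Section BoxSides.

Variables (P : list pt) (e : pt).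
Hypothesis HP : P <> [].
Let d q := dseg q e.

Lemma side_x_corners_le_lmax x0 :
  (forall p, In p P -> fst e * (fst p - x0) <= 0 /\ 0 <= x0 * (fst p - x0)) ->
  d (x0, ymin P) <= lmax d P /\ d (x0, ymax P) <= lmax d P.
Proof.
  intros Hx.
  assert (Hside : forall p, In p P -> d (x0, snd p) <= lmax d P).
  { intros [x y] Hp; destruct e as [ex ey]; destruct (Hx _ Hp).
    eapply Rle_trans; [apply dseg_move_x; eassumption | apply (lmax_ge d _ _ Hp)]. }
  destruct (lmin_attained snd P HP) as [p1 [Hp1 E1]].
  destruct (lmax_attained snd P HP) as [p2 [Hp2 E2]].
  unfold ymin, ymax; rewrite E1, E2; split; apply Hside; assumption.
Qed.

Lemma side_y_corners_le_lmax y0 :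
  (forall p, In p P -> snd e * (snd p - y0) <= 0 /\ 0 <= y0 * (snd p - y0)) ->
  d (xmin P, y0) <= lmax d P /\ d (xmax P, y0) <= lmax d P.
Proof.
  intros Hy.
  assert (Hside : forall p, In p P -> d (fst p, y0) <= lmax d P).
  { intros [x y] Hp; destruct e as [ex ey]; destruct (Hy _ Hp).
    eapply Rle_trans; [apply dseg_move_y; eassumption | apply (lmax_ge d _ _ Hp)]. }
  destruct (lmin_attained fst P HP) as [p1 [Hp1 E1]].
  destruct (lmax_attained fst P HP) as [p2 [Hp2 E2]].
  unfold xmin, xmax; rewrite E1, E2; split; apply Hside; assumption.
Qed.

Lemma xmin_side_le_lmax : (forall p, In p P -> 0 <= fst p) -> fst e <= 0 ->
  d (corner1 P) <= lmax d P /\ d (corner4 P) <= lmax d P.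
Proof.
  intros Hx He; apply side_x_corners_le_lmax; intros p Hp.
  destruct (lmin_attained fst P HP) as [q [Hq Eq]].
  pose proof (lmin_le fst P p Hp); pose proof (Hx q Hq); unfold xmin; nra.
Qed.

Lemma xmax_side_le_lmax : (forall p, In p P -> fst p <= 0) -> 0 <= fst e ->
  d (corner2 P) <= lmax d P /\ d (corner3 P) <= lmax d P.
Proof.
  intros Hx He; apply side_x_corners_le_lmax; intros p Hp.
  destruct (lmax_attained fst P HP) as [q [Hq Eq]].
  pose proof (lmax_ge fst P p Hp); pose proof (Hx q Hq); unfold xmax; nra.
Qed.

Lemma ymin_side_le_lmax : (forall p, In p P -> 0 <= snd p) -> snd e <= 0 ->
  d (corner1 P) <= lmax d P /\ d (corner2 P) <= lmax d P.
Proof.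
  intros Hy He; apply side_y_corners_le_lmax; intros p Hp.
  destruct (lmin_attained snd P HP) as [q [Hq Eq]].
  pose proof (lmin_le snd P p Hp); pose proof (Hy q Hq); unfold ymin; nra.
Qed.

Lemma ymax_side_le_lmax : (forall p, In p P -> snd p <= 0) -> 0 <= snd e ->
  d (corner3 P) <= lmax d P /\ d (corner4 P) <= lmax d P.
Proof.
  intros Hy He; apply and_comm, side_y_corners_le_lmax; intros p Hp.
  destruct (lmax_attained snd P HP) as [q [Hq Eq]].
  pose proof (lmax_ge snd P p Hp); pose proof (Hy q Hq); unfold ymax; nra.
Qed.

End BoxSides.

Lemma atan_pos z : 0 < z -> 0 < atan z.
Proof. intros Hz; rewrite <- atan_0; apply atan_increasing, Hz. Qed.

Lemma atan_neg z : z < 0 -> atan z < 0.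
Proof. intros Hz; rewrite <- atan_0; apply atan_increasing, Hz. Qed.

Ltac atan_div_facts x y :=
  pose proof PI_RGT_0; pose proof (atan_bound (y / x));
  try (assert (0 < atan (y / x))
         by (apply atan_pos; first [apply Rdiv_pos_pos; lra | apply Rdiv_neg_neg; lra]));
  try (assert (atan (y / x) < 0)
         by (apply atan_neg; first [apply Rdiv_pos_neg; lra | apply Rdiv_neg_pos; lra]));
  try (assert (atan (y / x) = 0)
         by (replace y with 0 by lra; unfold Rdiv; rewrite Rmult_0_l; apply atan_0)).

Definition quadrant_sign_x (k : nat) : R := match k with 1%nat | 4%nat => 1 | _ => -1 end.
Definition quadrant_sign_y (k : nat) : R := match k with 1%nat | 2%nat => 1 | _ => -1 end.

Lemma in_quadrant_signs k p : (1 <= k <= 4)%nat -> in_quadrant k p ->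
  0 <= quadrant_sign_x k * fst p /\ 0 <= quadrant_sign_y k * snd p.
Proof.
  destruct p as [x y]; intros Hk [Hne Hth]; unfold theta in Hth; simpl.
  assert (Hxy : ~ (x = 0 /\ y = 0)) by (intros [-> ->]; apply Hne; reflexivity).
  destruct (Rtotal_order y 0) as [Hy | [Hy | Hy]];
  destruct k as [|[|[|[|[|k]]]]]; try lia; simpl INR in Hth; simpl;
    repeat (destruct Rlt_dec in Hth || destruct Rle_dec in Hth); atan_div_facts x y;
    try (split; lra); exfalso; apply Hxy; split; lra.
Qed.

Lemma line_in_quadrant_of_signs k e : (1 <= k <= 4)%nat ->
  0 < quadrant_sign_x k * fst e -> 0 < quadrant_sign_y k * snd e -> line_in_quadrant k e.
Proof.
  destruct e as [ex ey]; intros Hk Hx Hy; unfold line_in_quadrant, theta.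
  destruct k as [|[|[|[|[|k]]]]]; try lia; simpl INR; simpl in Hx, Hy;
    repeat (destruct Rlt_dec || destruct Rle_dec); atan_div_facts ex ey; lra.
Qed.

Lemma third_largest_corners_le_lmax k P e : (1 <= k <= 4)%nat -> P <> [] ->
  (forall p, In p P -> in_quadrant k p) -> ~ line_in_quadrant k e ->
  let d q := dseg q e in
  third_largest (d (corner1 P)) (d (corner2 P)) (d (corner3 P)) (d (corner4 P)) <= lmax d P.
Proof.
  intros Hk HP HQ Hline d.
  assert (Hsign := fun p Hp => in_quadrant_signs k p Hk (HQ p Hp)).
  assert (Hopp : quadrant_sign_x k * fst e <= 0 \/ quadrant_sign_y k * snd e <= 0).
  { destruct (Rle_lt_dec (quadrant_sign_x k * fst e) 0); [now left|].
    destruct (Rle_lt_dec (quadrant_sign_y k * snd e) 0); [now right|].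
    exfalso; apply Hline, line_in_quadrant_of_signs; assumption. }
  apply third_largest_le_of_side.
  destruct k as [|[|[|[|[|k]]]]]; try lia; simpl in Hsign, Hopp; destruct Hopp.
  - do 3 right; apply xmin_side_le_lmax; [exact HP | intros p Hp; destruct (Hsign p Hp); lra | lra].
  - left; apply ymin_side_le_lmax; [exact HP | intros p Hp; destruct (Hsign p Hp); lra | lra].
  - right; left; apply xmax_side_le_lmax; [exact HP | intros p Hp; destruct (Hsign p Hp); lra | lra].
  - left; apply ymin_side_le_lmax; [exact HP | intros p Hp; destruct (Hsign p Hp); lra | lra].
  - right; left; apply xmax_side_le_lmax; [exact HP | intros p Hp; destruct (Hsign p Hp); lra | lra].
  - do 2 right; left; apply ymax_side_le_lmax; [exact HP | intros p Hp; destruct (Hsign p Hp); lra | lra].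
  - do 3 right; apply xmin_side_le_lmax; [exact HP | intros p Hp; destruct (Hsign p Hp); lra | lra].
  - do 2 right; left; apply ymax_side_le_lmax; [exact HP | intros p Hp; destruct (Hsign p Hp); lra | lra].
Qed.

Lemma sqrt_sum_sq_factor x y : x <> 0 -> sqrt (x ^ 2 + y ^ 2) = Rabs x * sqrt (1 + (y / x)²).
Proof.
  intros Hx; rewrite <- sqrt_Rsqr_abs, <- sqrt_mult_alt by apply Rle_0_sqr.
  f_equal; unfold Rsqr; field; exact Hx.
Qed.

Lemma ray_pt_theta p : p <> s0 -> ray_pt (theta p) (sqrt (fst p ^ 2 + snd p ^ 2)) = p.
Proof.
  destruct p as [x y]; intros Hne; unfold ray_pt, theta; cbn [fst snd].
  assert (Hs : sqrt (1 + (y / x)²) <> 0).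
  { apply Rgt_not_eq, sqrt_lt_R0; pose proof (Rle_0_sqr (y / x)); lra. }
  destruct (Rlt_dec 0 x).
  - rewrite sqrt_sum_sq_factor, Rabs_pos_eq by lra.
    destruct Rle_dec.
    + rewrite cos_atan, sin_atan; f_equal; field; auto with real.
    + rewrite cos_plus, sin_plus, cos_2PI, sin_2PI, cos_atan, sin_atan.
      f_equal; field; auto with real.
  - destruct (Rlt_dec x 0).
    + rewrite sqrt_sum_sq_factor, Rabs_left by lra.
      rewrite cos_plus, sin_plus, cos_PI, sin_PI, cos_atan, sin_atan.
      f_equal; field; auto with real.
    + replace x with 0 in * by lra; replace (0 ^ 2 + y ^ 2) with (y ^ 2) by ring.
      destruct (Rlt_dec 0 y); [|destruct (Rlt_dec y 0)].
      * rewrite sqrt_pow2, cos_PI2, sin_PI2 by lra; f_equal; ring.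
      * replace (y ^ 2) with ((- y) ^ 2) by ring.
        replace (3 * PI / 2) with (PI / 2 + PI) by field.
        rewrite sqrt_pow2, neg_cos, neg_sin, cos_PI2, sin_PI2 by lra; f_equal; ring.
      * replace y with 0 in * by lra; contradiction Hne; reflexivity.
Qed.

Lemma ray_entry_le P p q1 q2 e : In p P -> p <> s0 ->
  ray_box_points P (theta p) q1 q2 -> dseg q1 e <= dseg p e.
Proof.
  intros Hp Hne [t1 [t2 [Ht1 [_ [_ [_ [Hmin [-> _]]]]]]]].
  rewrite <- (ray_pt_theta p Hne) at 2.
  apply dseg_ray_monotone; split; [exact Ht1|].
  eapply proj1, Hmin; [apply sqrt_pos|].
  rewrite ray_pt_theta by exact Hne; apply in_box_of_In, Hp.
Qed.

Theorem theorem5 (k : nat) (P : list pt) (e : pt) (l1 l2 u1 u2 : pt) :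
  (1 <= k <= 4)%nat ->
  P <> [] ->
  (forall p, In p P -> in_quadrant k p) ->
  e <> s0 ->
  ~ line_in_quadrant k e ->
  ray_box_points P (theta_lb P) l1 l2 ->
  ray_box_points P (theta_ub P) u1 u2 ->
  let d := fun q => dseg q e in
  let dmax := lmax d P in
  Rmax (Rmax (Rmin (d l1) (d l2)) (Rmin (d u1) (d l2)))
       (third_largest (d (corner1 P)) (d (corner2 P)) (d (corner3 P)) (d (corner4 P))) <= dmax /\
  (forall p, In p P ->
     d p <= Rmax (Rmax (d (corner1 P)) (d (corner2 P))) (Rmax (d (corner3 P)) (d (corner4 P)))).
Proof.
  intros Hk HP HQ _ Hline Hl Hu d dmax.
  split.
  - apply Rmax_lub; [apply Rmax_lub|].
    + destruct (lmin_attained theta P HP) as [p [Hp Ep]].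
      unfold theta_lb in Hl; rewrite Ep in Hl.
      eapply Rle_trans; [apply Rmin_l|].
      eapply Rle_trans; [apply (ray_entry_le P p l1 l2 e Hp (proj1 (HQ p Hp)) Hl)|].
      apply (lmax_ge d _ _ Hp).
    + destruct (lmax_attained theta P HP) as [p [Hp Ep]].
      unfold theta_ub in Hu; rewrite Ep in Hu.
      eapply Rle_trans; [apply Rmin_l|].
      eapply Rle_trans; [apply (ray_entry_le P p u1 u2 e Hp (proj1 (HQ p Hp)) Hu)|].
      apply (lmax_ge d _ _ Hp).
    + exact (third_largest_corners_le_lmax k P e Hk HP HQ Hline).
  - intros p Hp; apply dseg_in_box_le_corners, in_box_of_In, Hp.
Qed.
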